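(* In the setting of the context, run top-$k$ constrained beam search ($k$-CBS) with beam width $B$, and let $F$ denote either its final candidate set $C_T$ or the subset $F_{(B)}\subseteq C_T$ of the (at most) $B$ pairs of $C_T$ with the largest second coordinate. Let $\mathsf{dist}\in\{\mathsf{Hamming},\mathsf{Levenshtein}\}$, $\varepsilon\ge0$, and define $$\mathrm{LB}_{\varepsilon,\mathsf{dist}}=\sum_{(\mathbf{z}_{\mathrm{pre}}\Vert\mathbf{x},\,\ell)\in F\,:\,\mathbf{x}\in\mathbb{B}^{\mathsf{dist}}_{\varepsilon}(\mathbf{z}_{\mathrm{suf}})}\exp(\ell),\quad \mathrm{covered}(F)=\sum_{(\cdot,\ell)\in F}\exp(\ell),\quad \mathrm{UB}_{\varepsilon,\mathsf{dist}}=\mathrm{LB}_{\varepsilon,\mathsf{dist}}+\bigl(1-\mathrm{covered}(F)\bigr).$$ Then $p^{\mathsf{dist}}_{\mathbf{z},\varepsilon}\le\mathrm{UB}_{\varepsilon,\mathsf{dist}}$.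
   Context: Let $\mathbb{V}$ be a finite vocabulary containing a designated end-of-sequence token EOS. A language model $\theta$ assigns to every finite token sequence (history) $\mathbf{h}$ a probability distribution $\Pr_\theta(\cdot\mid\mathbf{h})$ on $\mathbb{V}$ with $\Pr_\theta(v\mid\mathbf{h})>0$ for all $v$. For an integer $k\ge1$ and a history $\mathbf{h}$, let $S(\mathbf{h})\subseteq\mathbb{V}$ be the set of $k$ tokens with the largest values of $\Pr_\theta(\cdot\mid\mathbf{h})$ (ties broken by a fixed deterministic rule). The top-$k$ decoding distribution is $\Pr_{\theta,\phi}(v\mid\mathbf{h})=\Pr_\theta(v\mid\mathbf{h})/\sum_{u\in S(\mathbf{h})}\Pr_\theta(u\mid\mathbf{h})$ for $v\in S(\mathbf{h})$ and $0$ otherwise. Fix a prefix $\mathbf{z}_{\mathrm{pre}}\in\mathbb{V}^L$ and a target suffix $\mathbf{z}_{\mathrm{suf}}\in\mathbb{V}^T$. For $\mathbf{x}\in\mathbb{V}^T$, $\Pr_{\theta,\phi}(\mathbf{x}\mid\mathbf{z}_{\mathrm{pre}})=\prod_{t=1}^T\Pr_{\theta,\phi}(x_t\mid\mathbf{z}_{\mathrm{pre}}\Vert x_{1:t-1})$ ($\Vert$ is concatenation). For $\mathbf{b},\mathbf{c}\in\mathbb{V}^T$, $\mathsf{Hamming}(\mathbf{b},\mathbf{c})=\#\{t: b_t\ne c_t\}$ and $\mathsf{Levenshtein}(\mathbf{b},\mathbf{c})$ is the minimum number of unit-cost single-token substitutions, insertions and deletions transforming $\mathbf{b}$ into $\mathbf{c}$.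 The $\varepsilon$-ball is $\mathbb{B}^{\mathsf{dist}}_{\varepsilon}(\mathbf{z}_{\mathrm{suf}})=\{\mathbf{v}\in\mathbb{V}^T:\mathsf{dist}(\mathbf{v},\mathbf{z}_{\mathrm{suf}})\le\varepsilon\}$, and $p^{\mathsf{dist}}_{\mathbf{z},\varepsilon}=\sum_{\mathbf{v}\in\mathbb{B}^{\mathsf{dist}}_{\varepsilon}(\mathbf{z}_{\mathrm{suf}})}\Pr_{\theta,\phi}(\mathbf{v}\mid\mathbf{z}_{\mathrm{pre}})$. $k$-CBS with beam width $B$: set $L_0=\{(\mathbf{z}_{\mathrm{pre}},0)\}$. For $t=1,\dots,T$: let $C_t=\{(\mathbf{h}\Vert v,\ \ell+\log\Pr_{\theta,\phi}(v\mid\mathbf{h})):(\mathbf{h},\ell)\in L_{t-1},\ v\in S(\mathbf{h})\}$. If $t=T$, output $C_T$. If $t<T$, delete from $C_t$ every pair whose history ends in EOS, and let $L_t$ be the (at most) $B$ pairs of $C_t$ with the largest second coordinate (deterministic tie-breaking). Every pair in $C_T$ has the form $(\mathbf{z}_{\mathrm{pre}}\Vert\mathbf{x},\ell)$ with $\mathbf{x}\in\mathbb{V}^T$. *)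

From HB Require Import structures.
From mathcomp Require Import all_boot all_order all_algebra.
From mathcomp Require Import reals sequences exp.
Set Implicit Arguments. Unset Strict Implicit. Unset Printing Implicit Defensive.
Import Order.TTheory GRing.Theory Num.Theory.
Local Open Scope ring_scope.

Definition is_LM (V : finType) (R : realType) (P : seq V -> V -> R) : Prop :=
  (forall h v, 0 < P h v) /\ (forall h, \sum_(v : V) P h v = 1).

(* S h is a set of k tokens with the largest values of P h
   (S is a fixed function of h: a deterministic tie-breaking rule). *)
Definition is_topk (V : finType) (R : realType) (k : nat)
    (P : seq V -> V -> R) (S : seq V -> {set V}) : Prop :=
  forall h, #|S h| = k /\
    (forall u v, u \in S h -> v \notin S h -> P h v <= P h u).

Definition Pphi (V : finType) (R : realType)
    (P : seq V -> V -> R) (S : seq V -> {set V}) (h : seq V) (v : V) : R :=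
  if v \in S h then P h v / \sum_(u in S h) P h u else 0.

Definition seq_prob (V : finType) (R : realType) (T : nat)
    (P : seq V -> V -> R) (S : seq V -> {set V}) (pre : seq V)
    (x : T.-tuple V) : R :=
  \prod_(t < T) Pphi P S (pre ++ take t x) (tnth x t).

Definition hamming (V : finType) (T : nat) (b c : T.-tuple V) : nat :=
  #|[set t : 'I_T | tnth b t != tnth c t]|.

Definition edit_neighbors (V : finType) (s : seq V) : seq (seq V) :=
  [seq take i s ++ drop i.+1 s | i <- iota 0 (size s)]
  ++ [seq take p.1 s ++ p.2 :: drop p.1 s | p <- [seq (i, v) | i <- iota 0 (size s).+1, v <- enum V]]
  ++ [seq take p.1 s ++ p.2 :: drop p.1.+1 s | p <- [seq (i, v) | i <- iota 0 (size s), v <- enum V]].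

Fixpoint reach (V : finType) (n : nat) (s t : seq V) : bool :=
  match n with
  | 0 => s == t
  | n'.+1 => has (fun s' => reach n' s' t) (edit_neighbors s)
  end.

Lemma reach_cat (V : finType) m n (a b c : seq V) :
  reach m a b -> reach n b c -> reach (m + n) a c.
Proof.
elim: m a => [|m IH] a /=; first by move/eqP->.
move=> /hasP[s' Hs' Hr] Hbc; apply/hasP; exists s' => //; exact: IH.
Qed.

Lemma reach_del (V : finType) (s : seq V) : reach (size s) s [::].
Proof.
elim: s => [|x s IH] //.
change (has (fun s' => reach (size s) s' [::]) (edit_neighbors (x :: s))).
apply/hasP; exists s => //.
rewrite mem_cat; apply/orP; left; apply/mapP; exists 0%N => //.
by rewrite take0 /= drop0.
Qed.

Lemma reach_ins (V : finType) (c s : seq V) : reach (size c) s (c ++ s).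
Proof.
elim/last_ind: c s => [|c x IH] s /=; first by [].
rewrite size_rcons cat_rcons.
change (has (fun s' => reach (size c) s' (c ++ x :: s)) (edit_neighbors s)).
apply/hasP; exists (x :: s); last exact: IH.
rewrite mem_cat; apply/orP; right; rewrite mem_cat; apply/orP; left.
apply/mapP; exists (0%N, x); last by rewrite take0 drop0.
by apply/allpairsP; exists (0%N, x); split => //; rewrite mem_enum.
Qed.

Lemma reach_exists (V : finType) (s t : seq V) : exists n, reach n s t.
Proof.
exists (size s + size t)%N; apply: (reach_cat (reach_del s)).
by have := reach_ins t [::]; rewrite cats0.
Qed.

Definition levenshtein (V : finType) (b c : seq V) : nat :=
  ex_minn (reach_exists b c).

Inductive distkind := Hamming | Levenshtein.

Definition distance (V : finType) (T : nat) (d : distkind)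
    (b c : T.-tuple V) : nat :=
  match d with
  | Hamming => hamming b c
  | Levenshtein => levenshtein (tval b) (tval c)
  end.

Definition p_ball (V : finType) (R : realType) (T : nat)
    (P : seq V -> V -> R) (S : seq V -> {set V}) (pre : seq V)
    (zsuf : T.-tuple V) (d : distkind) (eps : R) : R :=
  \sum_(v : T.-tuple V | (distance d v zsuf)%:R <= eps) seq_prob P S pre v.

Definition expand (V : finType) (R : realType)
    (P : seq V -> V -> R) (S : seq V -> {set V})
    (L : seq (seq V * R)) : seq (seq V * R) :=
  flatten [seq [seq (rcons p.1 v, p.2 + ln (Pphi P S p.1 v)) | v <- enum (S p.1)]
          | p <- L].

Definition ends_in (V : finType) (EOS : V) (h : seq V) : bool :=
  (0 < size h)%N && (last EOS h == EOS).

(* Lsel consists of (at most) B pairs of C with the largest second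
   coordinate: min(B, |C|) elements of C, none smaller than a discarded one
   (any deterministic tie-breaking rule yields such a selection). *)
Definition topB (V : finType) (R : realType) (B : nat)
    (C Lsel : seq (seq V * R)) : Prop :=
  exists rest, perm_eq C (Lsel ++ rest) /\ size Lsel = minn B (size C) /\
    (forall p q, p \in Lsel -> q \in rest -> q.2 <= p.2).

Definition kcbs_output (V : finType) (R : realType) (EOS : V)
    (P : seq V -> V -> R) (S : seq V -> {set V}) (B T : nat)
    (pre : seq V) (C : seq (seq V * R)) : Prop :=
  exists Ls : nat -> seq (seq V * R),
    Ls 0%N = [:: (pre, 0)] /\
    (forall t, (0 < t < T)%N ->
       topB B [seq p <- expand P S (Ls t.-1) | ~~ ends_in EOS p.1] (Ls t)) /\
    C = expand P S (Ls T.-1).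

Definition LB (V : finType) (R : realType) (T : nat) (pre : seq V)
    (zsuf : T.-tuple V) (d : distkind) (eps : R) (F : seq (seq V * R)) : R :=
  \sum_(p <- F | [exists x : T.-tuple V,
                   (p.1 == pre ++ tval x) && ((distance d x zsuf)%:R <= eps)])
     expR p.2.

Definition covered (V : finType) (R : realType) (F : seq (seq V * R)) : R :=
  \sum_(p <- F) expR p.2.

Definition UB (V : finType) (R : realType) (T : nat) (pre : seq V)
    (zsuf : T.-tuple V) (d : distkind) (eps : R) (F : seq (seq V * R)) : R :=
  LB pre zsuf d eps F + (1 - covered F).

From HB Require Import structures.
From mathcomp Require Import all_boot all_order all_algebra.
From mathcomp Require Import reals sequences exp lra.
Set Implicit Arguments. Unset Strict Implicit. Unset Printing Implicit Defensive.
Import Order.TTheory GRing.Theory Num.Theory.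
Local Open Scope ring_scope.

(* Every candidate produced by k-CBS has the form (pre ++ x, ln Pr(x | pre)),
   and distinct candidates have distinct x: this invariant survives expansion,
   EOS-filtering and top-B selection.  Hence the candidates of F outside the
   ball carry at most the probability 1 - p of the complement of the ball, and
   splitting covered(F) into LB and that mass gives p <= LB + 1 - covered(F). *)

Section TopkDecoding.

Variables (V : finType) (R : realType).
Variables (P : seq V -> V -> R) (S : seq V -> {set V}).
Hypothesis P_gt0 : forall h v, 0 < P h v.

Lemma Pphi_ge0 h v : 0 <= Pphi P S h v.
Proof.
rewrite /Pphi; case: ifP => // _.
by rewrite divr_ge0 ?sumr_ge0 // => *; apply: ltW.
Qed.

Lemma sum_P_gt0 h v : v \in S h -> 0 < \sum_(u in S h) P h u.
Proof.
move=> Shv; rewrite (bigD1 v) //= ltr_wpDr //.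
by rewrite sumr_ge0 // => u _; rewrite ltW.
Qed.

Lemma Pphi_gt0 h v : v \in S h -> 0 < Pphi P S h v.
Proof. by move=> Shv; rewrite /Pphi Shv divr_gt0 // (sum_P_gt0 Shv). Qed.

Lemma sum_Pphi h : S h != set0 -> \sum_v Pphi P S h v = 1.
Proof.
case/set0Pn=> v /sum_P_gt0 sum_gt0.
by rewrite /Pphi -big_mkcond /= -mulr_suml divff // gt_eqF.
Qed.

Fixpoint cont_prob (h x : seq V) : R :=
  if x is v :: x' then Pphi P S h v * cont_prob (rcons h v) x' else 1.

Lemma cont_prob_rcons h x v :
  cont_prob h (rcons x v) = cont_prob h x * Pphi P S (h ++ x) v.
Proof.
elim: x h => [|w x IHx] h /=; first by rewrite mul1r mulr1 cats0.
by rewrite IHx mulrA cat_rcons.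
Qed.

Lemma cont_prob_ge0 h x : 0 <= cont_prob h x.
Proof. by elim: x h => [|v x IHx] h //=; rewrite mulr_ge0 ?Pphi_ge0. Qed.

Lemma cont_prob_nth x0 h x :
  cont_prob h x = \prod_(0 <= t < size x) Pphi P S (h ++ take t x) (nth x0 x t).
Proof.
elim: x h => [|v x IHx] h /=; first by rewrite big_geq.
by rewrite big_nat_recl // cats0 IHx; under eq_bigr do rewrite cat_rcons.
Qed.

Lemma seq_prob_cont_prob T pre (x : T.-tuple V) :
  seq_prob P S pre x = cont_prob pre x.
Proof.
case: T x => [|T] x; first by rewrite tuple0 /seq_prob big_ord0.
rewrite /seq_prob (cont_prob_nth (thead x)) size_tuple big_mkord.
by apply: eq_bigr => t _; rewrite (tnth_nth (thead x)).
Qed.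

Lemma sum_cont_prob_tuple n h :
  (forall h, S h != set0) -> \sum_(x : n.-tuple V) cont_prob h x = 1.
Proof.
move=> S_neq0; elim: n h => [|n IHn] h.
  rewrite (eq_bigr (fun=> 1)) => [|x _]; last by rewrite tuple0.
  by rewrite sumr_const card_tuple expn0.
rewrite -(sum_Pphi (S_neq0 h)).
rewrite (reindex (fun p : V * n.-tuple V => [tuple of p.1 :: p.2])) /=; last first.
  exists (fun x : n.+1.-tuple V => (thead x, [tuple of behead x])).
    by move=> [v x] _; congr pair; apply: val_inj.
  by move=> x _; rewrite [RHS]tuple_eta.
rewrite -(pair_bigA _ (fun v (x : n.-tuple V) => cont_prob h (v :: x))) /=.
apply: eq_bigr => v _.
by rewrite -mulr_sumr IHn mulr1.
Qed.

Lemma mem_expand L q :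
  q \in expand P S L -> exists2 p, p \in L & exists2 v, v \in S p.1 &
     q = (rcons p.1 v, p.2 + ln (Pphi P S p.1 v)).
Proof.
case/flatten_mapP=> p Lp /mapP[v Sv ->].
by exists p => //; exists v; rewrite // -mem_enum.
Qed.

Lemma uniq_expand L : uniq (map fst L) -> uniq (map fst (expand P S L)).
Proof.
elim: L => [|p L IHL] //= /andP[pL uL].
rewrite map_cat cat_uniq IHL // andbT -map_comp map_inj_uniq ?enum_uniq /=; last first.
  exact: rcons_injr.
apply/hasPn=> _ /mapP[q /mem_expand[p' Lp' [v _ ->]] ->] /=.
apply/mapP=> -[w _ /rcons_inj[eq_p _]].
by move: pL; rewrite -eq_p map_f.
Qed.

Definition scored_beam (pre : seq V) (n : nat) (L : seq (seq V * R)) : Prop :=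
  uniq (map fst L) /\
  {in L, forall p, exists x,
     [/\ size x = n, p.1 = pre ++ x & expR p.2 = cont_prob pre x]}.

Lemma scored_beam_expand pre n L :
  scored_beam pre n L -> scored_beam pre n.+1 (expand P S L).
Proof.
case=> uL scoredL; split; first exact: uniq_expand.
move=> _ /mem_expand[p Lp [v Sv ->]] /=.
have [x [sx px ex]] := scoredL p Lp.
exists (rcons x v); split; first by rewrite size_rcons sx.
  by rewrite px rcons_cat.
by rewrite expRD ex lnK ?posrE ?Pphi_gt0 // cont_prob_rcons -px.
Qed.

Lemma scored_beam_sub pre n L L' :
  scored_beam pre n L -> {subset L' <= L} -> uniq (map fst L') ->
  scored_beam pre n L'.
Proof. by case=> _ scoredL subL' uL'; split=> // p /subL' /scoredL. Qed.

Lemma scored_beam_filter pre n a L :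
  scored_beam pre n L -> scored_beam pre n (filter a L).
Proof.
move=> beamL; apply: (scored_beam_sub beamL) => [p|].
  by rewrite mem_filter => /andP[].
by apply: subseq_uniq (map_subseq _ (filter_subseq _ _)) _; case: beamL.
Qed.

Lemma scored_beam_topB pre n B C F :
  scored_beam pre n C -> topB B C F -> scored_beam pre n F.
Proof.
move=> beamC [rest [permC _]]; apply: (scored_beam_sub beamC) => [p Fp|].
  by rewrite (perm_mem permC) mem_cat Fp.
have := perm_uniq (perm_map fst permC); rewrite map_cat cat_uniq.
by case: beamC => -> _ /esym/andP[].
Qed.

Lemma kcbs_output_scored (EOS : V) B T pre C :
  (0 < T)%N -> kcbs_output EOS P S B T pre C -> scored_beam pre T C.
Proof.
move=> T_gt0 [Ls [Ls0 [Ls_step ->]]].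
have beam_Ls t : (t < T)%N -> scored_beam pre t (Ls t).
  elim: t => [|t IHt] ltT.
    rewrite Ls0; split=> // p; rewrite inE => /eqP-> /=.
    by exists [::]; rewrite cats0 expR0.
  apply: scored_beam_topB (Ls_step t.+1 ltT).
  exact/scored_beam_filter/scored_beam_expand/IHt/ltnW.
by rewrite -(prednK T_gt0); apply/scored_beam_expand/beam_Ls; rewrite prednK.
Qed.

Lemma sum_unique_key_le (F : seq (seq V * R)) (a : pred (seq V * R)) h (c : R) :
  uniq (map fst F) -> 0 <= c -> \sum_(p <- F | a p && (p.1 == h)) c <= c.
Proof.
move=> uF c_ge0; rewrite -big_filter.
have : (size [seq p <- F | a p && (p.1 == h)] <= 1)%N.
  rewrite size_filter (leq_trans (sub_count (a2 := fun p => p.1 == h) _ _)) //.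
    by move=> p /andP[].
  by rewrite -(count_map fst (pred1 h)) count_uniq_mem ?leq_b1.
by case: filter => [|p [|]] //= _; rewrite ?big_nil ?big_seq1.
Qed.

Lemma beam_mass_le pre T (F : seq (seq V * R)) (a : pred (seq V * R))
    (A : pred (T.-tuple V)) :
  scored_beam pre T F ->
  (forall p (x : T.-tuple V), p \in F -> a p -> p.1 = pre ++ x -> A x) ->
  \sum_(p <- F | a p) expR p.2 <= \sum_(x | A x) seq_prob P S pre x.
Proof.
case=> uF scoredF aA.
have entry_mass : \sum_(p <- F | a p) expR p.2 =
    \sum_(p <- F | a p) \sum_(x : T.-tuple V | p.1 == pre ++ x) seq_prob P S pre x.
  rewrite big_seq_cond [RHS]big_seq_cond; apply: eq_bigr => p /andP[Fp _].
  have [x [sx px ex]] := scoredF p Fp; have sx' : size x == T by rewrite sx.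
  rewrite (big_pred1 (Tuple sx')) ?seq_prob_cont_prob ?ex // => y.
  by rewrite px eqseq_cat // eqxx eq_sym.
rewrite entry_mass (exchange_big_dep xpredT) //= [leRHS]big_mkcond /=.
apply: ler_sum => x _; case: ifPn => Ax.
  by rewrite sum_unique_key_le // seq_prob_cont_prob cont_prob_ge0.
rewrite big_seq_cond big1 // => p /andP[Fp /andP[ap /eqP px]].
by move: Ax; rewrite (aA p x Fp ap px).
Qed.

Lemma sum_seq_prob pre T :
  (forall h, S h != set0) -> \sum_(x : T.-tuple V) seq_prob P S pre x = 1.
Proof.
move=> S_neq0; under eq_bigr do rewrite seq_prob_cont_prob.
exact: sum_cont_prob_tuple.
Qed.

End TopkDecoding.

Unset Implicit Arguments.

Theorem proposition2 (V : finType) (EOS : V) (R : realType)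
    (P : seq V -> V -> R) (k : nat) (S : seq V -> {set V})
    (B T : nat) (pre : seq V) (zsuf : T.-tuple V)
    (d : distkind) (eps : R) (C F : seq (seq V * R)) :
  is_LM P -> (0 < k)%N -> is_topk k P S -> (0 < T)%N ->
  kcbs_output EOS P S B T pre C ->
  (F = C \/ topB B C F) ->
  0 <= eps ->
  p_ball P S pre zsuf d eps <= UB pre zsuf d eps F.
Proof.
move=> [P_gt0 _] k_gt0 topk T_gt0 run F_sel _.
have S_neq0 h : S h != set0 by rewrite -card_gt0 (topk h).1.
have beamF : scored_beam P S pre T F.
  have beamC := kcbs_output_scored P_gt0 T_gt0 run.
  by case: F_sel => [->|]; last exact: scored_beam_topB.
set ball := fun x : T.-tuple V => (distance d x zsuf)%:R <= eps.
set in_ball := fun p : seq V * R =>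
  [exists x : T.-tuple V, (p.1 == pre ++ tval x) && ball x].
have outside_ball : \sum_(p <- F | ~~ in_ball p) expR p.2 <=
    \sum_(x | ~~ ball x) seq_prob P S pre x.
  apply: (beam_mass_le P_gt0 beamF) => p x _ /negP not_in px.
  by apply/negP => bx; apply: not_in; apply/existsP; exists x; rewrite px eqxx.
have total : p_ball P S pre zsuf d eps + \sum_(x | ~~ ball x) seq_prob P S pre x = 1.
  by rewrite -(sum_seq_prob P_gt0 pre T S_neq0) [RHS](bigID ball).
rewrite /UB (_ : LB _ _ _ _ _ = \sum_(p <- F | in_ball p) expR p.2) //.
by rewrite /covered [X in 1 - X](bigID in_ball) /=; lra.
Qed.
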